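(* Let $F$ be a field of characteristic two and let $(A,\sigma)$ be a totally decomposable central simple $F$-algebra with orthogonal involution. If $x\in\mathrm{Sym}(A,\sigma)^+$, then $x^2\in Q(\mathfrak{Pf}(A,\sigma))$.
   Context: Involutions are of the first kind. $(A,\sigma)$ is totally decomposable if $(A,\sigma)\simeq\bigotimes_{i=1}^n(Q_i,\sigma_i)$ with quaternion $F$-algebras with involution. $\mathrm{Sym}(A,\sigma)^+=\{x\in A\mid\sigma(x)=x,\ x^2\in F\}$. The Pfister invariant $\mathfrak{Pf}(A,\sigma)$ is the bilinear Pfister form $\langle\!\langle\alpha_1,\dots,\alpha_n\rangle\!\rangle=\langle1,\alpha_1\rangle\otimes\cdots\otimes\langle1,\alpha_n\rangle$ where $\alpha_i\in F^\times$ represents $\mathrm{disc}\,\sigma_i\in F^\times/F^{\times2}$ (independent of the decomposition up to isometry). For a symmetric bilinear form $\mathfrak b$ on $V$, $Q(\mathfrak b)=\{\mathfrak b(v,v)\mid 0\ne v\in V\}\cup\{0\}$. *)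

From HB Require Import structures.
From mathcomp Require Import all_boot all_order all_algebra all_field.
Set Implicit Arguments. Unset Strict Implicit. Unset Printing Implicit Defensive.
Import GRing.Theory.
Local Open Scope ring_scope.

Section Defs.
Variables (F : fieldType) (A : falgType F).

Definition central_simple : Prop :=
  (forall z : A, (forall y : A, z * y = y * z) -> exists c : F, z = c%:A) /\
  (forall I : {vspace A},
     (forall a x : A, x \in I -> (a * x \in I) && (x * a \in I)) ->
     I = 0%VS \/ I = fullv).

Definition involution_first_kind (s : A -> A) : Prop :=
  (forall (k : F) (x y : A), s (k *: x + y) = k *: s x + s y) /\
  (forall x y : A, s (x * y) = s y * s x) /\
  (forall x : A, s (s x) = x).

(* char 2 (KMRT Prop. 2.6): sigma is symplectic iff 1 \in Symd(A,sigma);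
   orthogonal = not symplectic *)
Definition orthogonal_inv (s : A -> A) : Prop :=
  ~ (exists y : A, y + s y = 1).

Definition SymPlus (s : A -> A) (x : A) : Prop :=
  s x = x /\ exists c : F, x * x = c%:A.

Definition qbasis (u v : A) (k : 'I_4) : A :=
  match val k with 0 => 1 | 1 => u | 2 => v | _ => u * v end.

Definition qspan (u v : A) : {vspace A} := span [:: 1; u; v; u * v].

(* u, v generate a quaternion algebra [a, b)_F (char 2 presentation) *)
Definition quat_gens (u v : A) : Prop :=
  exists a b : F, b != 0 /\ u * u + u = a%:A /\ v * v = b%:A /\
                  v * u = (u + 1) * v.

(* (A,sigma) = (x)_i (Q_i, sigma|Q_i) with Q_i = span(1,u_i,v_i,u_i v_i):
   the Q_i are sigma-stable quaternion subalgebras, pairwise commuting, and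
   the products of their basis elements form a basis of A, i.e.
   multiplication Q_1 (x) ... (x) Q_n -> A is an isomorphism. *)
Definition tot_decomp (n : nat) (s : A -> A) (u v : 'I_n -> A) : Prop :=
  (forall i, quat_gens (u i) (v i)) /\
  (forall i, s (u i) \in qspan (u i) (v i) /\ s (v i) \in qspan (u i) (v i)) /\
  (forall i j, i != j -> forall x y, x \in qspan (u i) (v i) ->
       y \in qspan (u j) (v j) -> x * y = y * x) /\
  basis_of fullv [seq \prod_(i < n) qbasis (u i) (v i) (f i)
                 | f : {ffun 'I_n -> 'I_4}].

(* reduced norm of a non-scalar element a of a quaternion algebra:
   the constant term of its (reduced) characteristic polynomial
   X^2 - t X + nrd *)
Definition quat_nrd (a : A) (nrd : F) : Prop :=
  exists t : F, a * a - t *: a + nrd%:A = 0.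

(* alpha in F^x represents disc(sigma|Q) in F^x/F^x2, where
   disc = Nrd(a) for a nonzero (hence invertible) a in Alt(Q,sigma) *)
Definition represents_disc (s : A -> A) (u v : A) (alpha : F) : Prop :=
  exists y : A, y \in qspan u v /\ y + s y != 0 /\
    exists nrd c : F, quat_nrd (y + s y) nrd /\ c != 0 /\ nrd = alpha * c ^+ 2.

End Defs.

Section Pfister.
Variable (F : fieldType).

(* <<alpha_1,...,alpha_n>> = (x)_i <1, alpha_i>: the diagonal bilinear form
   on F^{subsets of 'I_n} with entries prod_{i in S} alpha_i *)
Definition pfister (n : nat) (alpha : 'I_n -> F)
    (x y : {ffun {set 'I_n} -> F}) : F :=
  \sum_(S : {set 'I_n}) (\prod_(i in S) alpha i) * x S * y S.

Definition Qvals (V : zmodType) (b : V -> V -> F) (c : F) : Prop :=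
  c = 0 \/ exists w : V, w != 0 /\ b w w = c.

End Pfister.

From HB Require Import structures.
From mathcomp Require Import all_boot all_order all_algebra all_field.
From mathcomp Require Import ring.
Set Implicit Arguments. Unset Strict Implicit. Unset Printing Implicit Defensive.
Import GRing.Theory.
Local Open Scope ring_scope.

(* Let Trd_i be the reduced trace of Q_i and lambda the linear form on
   A = Q_1 (x) ... (x) Q_n picking the coefficient of u_1 ... u_n in the
   monomial basis, so that lambda (z_1 ... z_n) = Trd_1 z_1 ... Trd_n z_n.
   As Trd_i \o sigma = Trd_i, also lambda \o sigma = lambda, and in
   characteristic 2 the quadratic form phi w = lambda (sigma w * w) has no
   cross terms: phi (sum_f c_f m_f) = sum_f c_f^2 phi m_f.  On a monomial phi
   is a product of the Trd_i (sigma z * z), and these are of the form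
   s^2 + t^2 alpha_i: in Q_i the nonzero alternating element e spans
   Alt(Q_i, sigma), which gives sigma z = z + (Trd (e z) / Nrd e) e, and Nrd e
   represents disc sigma_i.  Pfister values are closed under sums and under
   multiplication by such norms, so every value of phi is a Pfister value.
   Finally phi (x m) = c phi m when sigma x = x and x^2 = c, and a monomial m
   with d = phi m <> 0 exists, whence c = d^-2 (d phi (x m)) is a Pfister
   value. *)

Lemma natr_pchar2_even {R : nzRingType} :
  (2 \in [pchar R])%N -> forall k, ~~ odd k -> k%:R = 0 :> R.
Proof. by move=> char2 k k_even; apply/eqP; rewrite -(dvdn_pcharf char2) dvdn2. Qed.

Lemma oppr_natr_pchar2_even {R : nzRingType} :
  (2 \in [pchar R])%N -> forall k, ~~ odd k -> - k%:R = 0 :> R.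
Proof. by move=> char2 k /(natr_pchar2_even char2) ->; rewrite oppr0. Qed.

(* [ring] only rewrites with the given constant equations, so every even
   coefficient that normalisation can produce has to be supplied. *)
Ltac ring2 char2 := apply/eqP; rewrite -subr_eq0; apply/eqP;
  ring: (@natr_pchar2_even _ char2 2%N isT) (@oppr_natr_pchar2_even _ char2 2%N isT)
        (@natr_pchar2_even _ char2 4%N isT) (@oppr_natr_pchar2_even _ char2 4%N isT)
        (@natr_pchar2_even _ char2 6%N isT) (@oppr_natr_pchar2_even _ char2 6%N isT)
        (@natr_pchar2_even _ char2 8%N isT) (@oppr_natr_pchar2_even _ char2 8%N isT)
        (@natr_pchar2_even _ char2 10%N isT) (@oppr_natr_pchar2_even _ char2 10%N isT)
        (@natr_pchar2_even _ char2 12%N isT) (@oppr_natr_pchar2_even _ char2 12%N isT)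
        (@natr_pchar2_even _ char2 16%N isT) (@oppr_natr_pchar2_even _ char2 16%N isT).

Section QuaternionChar2.
Variables (F : fieldType) (A : algType F).
Hypothesis char2 : (2 \in [pchar F])%N.
Variables (u v : A) (a b : F).
Hypotheses (b_neq0 : b != 0) (uu : u * u + u = a%:A) (vv : v * v = b%:A)
  (vu : v * u = (u + 1) * v).

Definition quat (p0 p1 p2 p3 : F) : A :=
  p0%:A + p1 *: u + p2 *: v + p3 *: (u * v).

Lemma quatD p0 p1 p2 p3 q0 q1 q2 q3 :
  quat p0 p1 p2 p3 + quat q0 q1 q2 q3 = quat (p0 + q0) (p1 + q1) (p2 + q2) (p3 + q3).
Proof.
by rewrite /quat !scalerDl addrACA; congr (_ + _); rewrite addrACA; congr (_ + _);
  rewrite addrACA.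
Qed.

Lemma quatZ k p0 p1 p2 p3 :
  k *: quat p0 p1 p2 p3 = quat (k * p0) (k * p1) (k * p2) (k * p3).
Proof. by rewrite /quat !scalerDr !scalerA. Qed.

Lemma quatN p0 p1 p2 p3 : - quat p0 p1 p2 p3 = quat (- p0) (- p1) (- p2) (- p3).
Proof. by rewrite -scaleN1r quatZ !mulN1r. Qed.

Lemma quat_alg k : quat k 0 0 0 = k%:A.
Proof. by rewrite /quat !scale0r !addr0. Qed.

Lemma quat_1 : quat 1 0 0 0 = 1.
Proof. by rewrite quat_alg scale1r. Qed.

Lemma quat_u : quat 0 1 0 0 = u.
Proof. by rewrite /quat !scale0r !addr0 add0r scale1r. Qed.

Lemma quat_v : quat 0 0 1 0 = v.
Proof. by rewrite /quat !scale0r !addr0 add0r scale1r. Qed.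

Lemma quat_uv : quat 0 0 0 1 = u * v.
Proof. by rewrite /quat !scale0r !add0r scale1r. Qed.

Local Ltac quat_collect :=
  rewrite -?quat_1 -?quat_uv -?quat_u -?quat_v ?(quatZ, quatN, quatD).

Lemma quatM p0 p1 p2 p3 q0 q1 q2 q3 :
  quat p0 p1 p2 p3 * quat q0 q1 q2 q3 =
  quat (p0 * q0 + a * p1 * q1 + b * p2 * q2 + b * p2 * q3 + a * b * p3 * q3)
       (p0 * q1 + p1 * q0 - p1 * q1 + b * p2 * q3 + b * p3 * q2)
       (p0 * q2 + a * p1 * q3 + p2 * q0 + p2 * q1 + a * p3 * q1)
       (p0 * q3 + p1 * q2 - p1 * q3 + p2 * q1 + p3 * q0).
Proof.
have uuE : u * u = a%:A - u by rewrite -uu addrK.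
have mulu r0 r1 r2 r3 : u * quat r0 r1 r2 r3 = quat (a * r1) (r0 - r1) (a * r3) (r2 - r3).
  rewrite {1}/quat !mulrDr mulr_algr -!scalerAr mulrA uuE mulrBl mulr_algl.
  by quat_collect; congr quat; ring.
have mulv r0 r1 r2 r3 : v * quat r0 r1 r2 r3 = quat (b * r2 + b * r3) (b * r3) (r0 + r1) r1.
  rewrite {1}/quat !mulrDr mulr_algr -!scalerAr mulrA vu vv -mulrA vv mulrDl mul1r.
  by rewrite mulr_algr; quat_collect; congr quat; ring.
rewrite {1}/quat !mulrDl mulr_algl -!scalerAl -[u * v * _]mulrA !mulv !mulu.
by quat_collect; congr quat; ring.
Qed.

Lemma quat_eq0 p0 p1 p2 p3 :
  quat p0 p1 p2 p3 = 0 -> [/\ p0 = 0, p1 = 0, p2 = 0 & p3 = 0].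
Proof.
have alg_eq0 k : k%:A = 0 :> A -> k = 0.
  by move/eqP; rewrite scaler_eq0 oner_eq0 orbF => /eqP.
have quat01_eq0 k0 k1 : quat k0 k1 0 0 = 0 -> k0 = 0 /\ k1 = 0.
  move=> z0; have : (v * quat k0 k1 0 0 + quat k0 k1 0 0 * v) * v = (b * k1)%:A.
    by rewrite -quat_v !quatM quatD quatM -quat_alg; congr quat; ring2 char2.
  rewrite z0 mulr0 mul0r addr0 mul0r => /esym/alg_eq0/eqP.
  rewrite mulf_eq0 (negbTE b_neq0) /= => /eqP k1_0.
  by move: z0; rewrite k1_0 quat_alg => /alg_eq0.
move=> z0; have : (u * quat p0 p1 p2 p3 + quat p0 p1 p2 p3 * u) * v =
                  quat (b * p2) (b * p3) 0 0.
  by rewrite -quat_u -quat_v !quatM quatD quatM; congr quat; ring2 char2.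
rewrite z0 mulr0 mul0r addr0 mul0r => /esym/quat01_eq0[/eqP + /eqP].
rewrite !mulf_eq0 (negbTE b_neq0) /= => /eqP p2_0 /eqP p3_0.
by move: z0; rewrite p2_0 p3_0 => /quat01_eq0[].
Qed.

Lemma quat_inj p0 p1 p2 p3 q0 q1 q2 q3 :
  quat p0 p1 p2 p3 = quat q0 q1 q2 q3 -> [/\ p0 = q0, p1 = q1, p2 = q2 & p3 = q3].
Proof.
move/eqP; rewrite -subr_eq0 quatN quatD => /eqP/quat_eq0[].
by move=> /eqP + /eqP + /eqP + /eqP; rewrite !subr_eq0 => /eqP-> /eqP-> /eqP-> /eqP->.
Qed.

Lemma quat_sqr p0 p1 p2 p3 :
  quat p0 p1 p2 p3 * quat p0 p1 p2 p3 = p1 *: quat p0 p1 p2 p3 +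
  (p0 * p0 + a * p1 * p1 + b * p2 * p2 + b * p2 * p3 + a * b * p3 * p3 + p1 * p0)%:A.
Proof. by rewrite quatM quatZ -quat_alg quatD; congr quat; ring2 char2. Qed.

End QuaternionChar2.

Lemma proportional_pair (F : fieldType) (x2 x3 y2 y3 : F) :
  (y2 != 0) || (y3 != 0) -> x2 * y3 = x3 * y2 ->
  exists mu, x2 = mu * y2 /\ x3 = mu * y3.
Proof.
have [y2_0 /= y3_neq0 | y2_neq0 _ cross] := eqVneq y2 0.
  rewrite y2_0 mulr0 => /eqP; rewrite mulf_eq0 (negbTE y3_neq0) orbF => /eqP->.
  by exists (x3 / y3); rewrite mulr0 divfK.
exists (x2 / y2); rewrite divfK //; split=> //.
by apply: (mulIf y2_neq0); rewrite -cross mulrAC divfK.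
Qed.

Section InvolutionFirstKind.
Variables (F : fieldType) (A : falgType F) (s : A -> A).
Hypothesis s_inv : involution_first_kind s.

Lemma sigmaD x y : s (x + y) = s x + s y.
Proof. by case: s_inv => lin _; have := lin 1 x y; rewrite !scale1r. Qed.

Lemma sigma0 : s 0 = 0.
Proof. by apply: (addrI (s 0)); rewrite -sigmaD !addr0. Qed.

Lemma sigmaZ k x : s (k *: x) = k *: s x.
Proof. by case: s_inv => lin _; have := lin k x 0; rewrite !addr0 sigma0 addr0. Qed.

Lemma sigmaN x : s (- x) = - s x.
Proof. by rewrite -scaleN1r sigmaZ scaleN1r. Qed.

Lemma sigmaM x y : s (x * y) = s y * s x.
Proof. by case: s_inv => _ []. Qed.

Lemma sigmaK : involutive s.
Proof. by case: s_inv => _ []. Qed.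

Lemma sigma1 : s 1 = 1.
Proof. by rewrite -[s 1]mulr1 -{2}(sigmaK 1) -sigmaM mulr1 sigmaK. Qed.

Lemma sigma_alg k : s k%:A = k%:A.
Proof. by rewrite sigmaZ sigma1. Qed.

Lemma alt_alg_eq0 : orthogonal_inv s -> forall x k, x + s x = k%:A -> k = 0.
Proof.
move=> s_orth x k xk; apply/eqP; apply: contraT => k_neq0; case: s_orth.
by exists (k^-1 *: x); rewrite sigmaZ -scalerDr xk scalerA mulVf // scale1r.
Qed.

End InvolutionFirstKind.

Definition ord_u : 'I_4 := @Ordinal 4 1 isT.

Section QuaternionSpan.
Variables (F : fieldType) (A : falgType F).
Hypothesis char2 : (2 \in [pchar F])%N.
Variables (u v : A) (a b : F).
Hypotheses (b_neq0 : b != 0) (uu : u * u + u = a%:A) (vv : v * v = b%:A)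
  (vu : v * u = (u + 1) * v).

Definition qtuple : 4.-tuple A := [tuple 1; u; v; u * v].

Definition qcoord (k : 'I_4) (z : A) : F := coord qtuple k z.

(* The reduced trace of [quat u v p0 p1 p2 p3] is [p1] in characteristic 2. *)
Definition qtrace : A -> F := qcoord ord_u.

Lemma qtuple_nth (k : 'I_4) : qtuple`_k = qbasis u v k.
Proof. by case: k => [[|[|[|[|k]]]] hk]. Qed.

Lemma free_qtuple : free qtuple.
Proof.
apply/freeP => k; rewrite !big_ord_recl big_ord0 addr0 !addrA /=.
move/(quat_eq0 char2 b_neq0 uu vv vu) => [k0 k1 k2 k3].
by case=> [[|[|[|[|i]]]] // Hi]; [rewrite -k0 | rewrite -k1 | rewrite -k2 | rewrite -k3];
   congr k; apply: val_inj.
Qed.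

Lemma quat_sum p0 p1 p2 p3 :
  quat u v p0 p1 p2 p3 = \sum_(i < 4) [:: p0; p1; p2; p3]`_i *: qtuple`_i.
Proof. by rewrite !big_ord_recl big_ord0 addr0 !addrA. Qed.

Lemma qcoord_quat p0 p1 p2 p3 (k : 'I_4) :
  qcoord k (quat u v p0 p1 p2 p3) = [:: p0; p1; p2; p3]`_k.
Proof. by rewrite /qcoord quat_sum coord_sum_free // free_qtuple. Qed.

Lemma qtrace_quat p0 p1 p2 p3 : qtrace (quat u v p0 p1 p2 p3) = p1.
Proof. exact: qcoord_quat. Qed.

Lemma qspan_expansion z :
  z \in qspan u v -> z = \sum_(k < 4) qcoord k z *: qbasis u v k.
Proof.
move=> z_in; rewrite {1}(coord_span z_in).
by apply: eq_bigr => k _; rewrite qtuple_nth.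
Qed.

Lemma quat_in_qspan p0 p1 p2 p3 : quat u v p0 p1 p2 p3 \in qspan u v.
Proof. by rewrite quat_sum memv_suml // => i _; rewrite memvZ ?memv_span ?mem_nth. Qed.

Lemma qspanP z :
  reflect (exists p0 p1 p2 p3, z = quat u v p0 p1 p2 p3) (z \in qspan u v).
Proof.
apply: (iffP idP) => [/qspan_expansion -> | [p0 [p1 [p2 [p3 ->]]]]]; last first.
  exact: quat_in_qspan.
rewrite !big_ord_recl big_ord0 addr0 !addrA /=.
by do 4 eexists.
Qed.

Lemma alg_in_qspan k : k%:A \in qspan u v.
Proof. by rewrite -(quat_alg u v) quat_in_qspan. Qed.

Lemma qbasis_in_qspan k : qbasis u v k \in qspan u v.
Proof. by rewrite -qtuple_nth memv_span ?mem_nth. Qed.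

Lemma qspanM : {in qspan u v &, forall x y, x * y \in qspan u v}.
Proof.
move=> _ _ /qspanP[p0 [p1 [p2 [p3 ->]]]] /qspanP[q0 [q1 [q2 [q3 ->]]]].
by rewrite (quatM uu vv vu) quat_in_qspan.
Qed.

Lemma qtraceD x y : qtrace (x + y) = qtrace x + qtrace y.
Proof. exact: linearD. Qed.

Lemma qtraceC : {in qspan u v &, forall x y, qtrace (x * y) = qtrace (y * x)}.
Proof.
move=> _ _ /qspanP[p0 [p1 [p2 [p3 ->]]]] /qspanP[q0 [q1 [q2 [q3 ->]]]].
by rewrite !(quatM uu vv vu) !qtrace_quat; ring.
Qed.

End QuaternionSpan.

Section QuaternionInvolution.
Variables (F : fieldType) (A : falgType F).
Hypothesis char2 : (2 \in [pchar F])%N.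
Variables (u v : A) (a b : F).
Hypotheses (b_neq0 : b != 0) (uu : u * u + u = a%:A) (vv : v * v = b%:A)
  (vu : v * u = (u + 1) * v).
Variable s : A -> A.
Hypotheses (s_inv : involution_first_kind s)
  (su : s u \in qspan u v) (sv : s v \in qspan u v).

Local Notation quat := (quat u v).
Local Notation quatM := (quatM uu vv vu).
Local Notation quat_alg := (quat_alg u v).
Local Notation qtrace_quat := (qtrace_quat char2 b_neq0 uu vv vu).
Local Notation qtraceC := (qtraceC char2 b_neq0 uu vv vu).
Local Notation qspanM := (qspanM uu vv vu).
Local Notation quat_inj := (quat_inj char2 b_neq0 uu vv vu).
Local Notation quat_sqr := (quat_sqr char2 uu vv vu).
Local Notation sigmaD := (sigmaD s_inv).
Local Notation sigmaZ := (sigmaZ s_inv).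
Local Notation sigmaN := (sigmaN s_inv).
Local Notation sigmaM := (sigmaM s_inv).
Local Notation sigmaK := (sigmaK s_inv).
Local Notation sigma_alg := (sigma_alg s_inv).

Lemma sigma_qspan : {in qspan u v, forall z, s z \in qspan u v}.
Proof.
move=> _ /qspanP[p0 [p1 [p2 [p3 ->]]]].
rewrite /quat !sigmaD !sigmaZ (sigma1 s_inv) sigmaM.
by do !apply: memvD; rewrite ?alg_in_qspan //; apply: memvZ => //; apply: qspanM.
Qed.

Lemma sigma_quat p0 p1 p2 p3 :
  exists q0 q1 q2 q3, s (quat p0 p1 p2 p3) = quat q0 q1 q2 q3.
Proof. exact/qspanP/sigma_qspan/quat_in_qspan. Qed.

Lemma sigma_quat_trace p0 p1 p2 p3 q0 q1 q2 q3 :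
  s (quat p0 p1 p2 p3) = quat q0 q1 q2 q3 -> q1 = p1.
Proof.
move=> sz; apply/eqP; apply: contraT => q1_neq_p1.
have := sigmaM (quat p0 p1 p2 p3) (quat p0 p1 p2 p3).
rewrite quat_sqr sigmaD sigmaZ sigma_alg sz quat_sqr -!quat_alg !quatZ !quatD.
have coord_eq0 r : p1 * r + 0 = q1 * r + 0 -> r = 0.
  rewrite !addr0 => /eqP; rewrite -subr_eq0 -mulrBl mulf_eq0 subr_eq0 eq_sym.
  by rewrite (negbTE q1_neq_p1) => /eqP.
case/quat_inj => _ /coord_eq0 q1_0 /coord_eq0 q2_0 /coord_eq0 q3_0.
move: sz; rewrite q1_0 q2_0 q3_0 quat_alg => /(congr1 s).
rewrite sigmaK sigma_alg -quat_alg => /quat_inj[_ p1_0 _ _].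
by rewrite q1_0 p1_0 eqxx in q1_neq_p1.
Qed.

Lemma qtrace_sigma : {in qspan u v, forall z, qtrace u v (s z) = qtrace u v z}.
Proof.
move=> _ /qspanP[p0 [p1 [p2 [p3 ->]]]].
have [q0 [q1 [q2 [q3 sz]]]] := sigma_quat p0 p1 p2 p3.
by rewrite sz !qtrace_quat (sigma_quat_trace sz).
Qed.

Lemma qtrace_alt_mul_sym x m :
  x \in qspan u v -> m \in qspan u v -> s m = m -> qtrace u v ((x + s x) * m) = 0.
Proof.
move=> x_in m_in sm; have sx_in := sigma_qspan x_in.
rewrite mulrDl qtraceD -(qtrace_sigma (qspanM sx_in m_in)) sigmaM sigmaK sm.
by rewrite (qtraceC x_in m_in) addrr_pchar2.
Qed.

Hypothesis s_orth : orthogonal_inv s.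

Section Alternating.
Variables (y : A) (e0 e2 e3 : F).
Hypotheses (y_in : y \in qspan u v) (alt_y : y + s y = quat e0 0 e2 e3)
  (e_neq0 : quat e0 0 e2 e3 != 0).
Local Notation e := (quat e0 0 e2 e3).

Definition alt_norm : F := e0 * e0 + b * e2 * e2 + b * e2 * e3 + a * b * e3 * e3.

(* The reduced trace of [e * quat p0 p1 p2 p3]. *)
Definition alt_trace (p1 p2 p3 : F) : F := e0 * p1 + b * e2 * p3 + b * e3 * p2.

Lemma sigma_alt : s e = e.
Proof. by rewrite -alt_y sigmaD sigmaK addrC. Qed.

Lemma alt_nonscalar : (e2 != 0) || (e3 != 0).
Proof.
apply: contraT; rewrite negb_or !negbK => /andP[/eqP e2_0 /eqP e3_0].
have /(alt_alg_eq0 s_inv s_orth) e0_0 : y + s y = e0%:A by rewrite alt_y e2_0 e3_0 quat_alg.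
by move: e_neq0; rewrite e0_0 e2_0 e3_0 quat_alg scale0r eqxx.
Qed.

Lemma alt_sqr : e * e = alt_norm%:A.
Proof. by rewrite quatM -quat_alg; congr quat; rewrite /alt_norm; ring2 char2. Qed.

Lemma alt_norm_nrd nrd : quat_nrd e nrd -> alt_norm = nrd.
Proof.
case=> t; rewrite alt_sqr -!quat_alg quatZ quatN !quatD => /(quat_eq0 char2 b_neq0 uu vv vu).
rewrite !add0r !addr0 => -[nrd_eq _ /eqP te2 /eqP te3].
have t0 : t = 0.
  apply/eqP; apply: contraT => t_neq0; move: alt_nonscalar te2 te3.
  by rewrite !oppr_eq0 !mulf_eq0 (negbTE t_neq0) => /orP[] /negbTE ->.
by move: nrd_eq; rewrite t0 mul0r subr0 => /eqP; rewrite addr_eq0 (oppr_pchar2 char2) => /eqP.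
Qed.

Lemma alt_span p0 p1 p2 p3 :
  exists mu, quat p0 p1 p2 p3 + s (quat p0 p1 p2 p3) = mu *: e.
Proof.
have [q0 [q1 [q2 [q3 sz]]]] := sigma_quat p0 p1 p2 p3.
have q1E := sigma_quat_trace sz.
have tr0 := qtrace_alt_mul_sym (quat_in_qspan u v p0 p1 p2 p3)
  (quat_in_qspan u v e0 0 e2 e3) sigma_alt.
rewrite sz quatD quatM qtrace_quat q1E in tr0.
have cross : (p2 + q2) * e3 = (p3 + q3) * e2.
  apply/eqP; rewrite -subr_eq0 -(mulrI_eq0 _ (mulfI b_neq0)) -[X in _ == X]tr0.
  by apply/eqP; ring2 char2.
have [mu [mu2 mu3]] := proportional_pair alt_nonscalar cross.
have mu0 : p0 + q0 - mu * e0 = 0.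
  apply: (alt_alg_eq0 s_inv s_orth (x := quat p0 p1 p2 p3 - mu *: y)).
  rewrite sigmaD sigmaN sigmaZ addrACA -opprD -scalerDr alt_y sz.
  by rewrite quatD quatZ quatN quatD -quat_alg; congr quat; rewrite ?mu2 ?mu3 ?q1E; ring2 char2.
exists mu; rewrite sz quatD quatZ q1E mulr0 addrr_pchar2 //; congr quat => //.
by apply/eqP; rewrite -subr_eq0 mu0.
Qed.

Lemma sigma_quat_alt p0 p1 p2 p3 mu :
  quat p0 p1 p2 p3 + s (quat p0 p1 p2 p3) = mu *: e ->
  s (quat p0 p1 p2 p3) = quat (mu * e0 - p0) (- p1) (mu * e2 - p2) (mu * e3 - p3).
Proof.
move=> alt_z; rewrite -[s _](addKr (quat p0 p1 p2 p3)) alt_z quatN quatZ quatD.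
by congr quat; ring.
Qed.

Lemma alt_coef_root p0 p1 p2 p3 mu :
  quat p0 p1 p2 p3 + s (quat p0 p1 p2 p3) = mu *: e ->
  mu * (alt_trace p1 p2 p3 + mu * alt_norm) = 0.
Proof.
move=> /sigma_quat_alt sz; have := sigmaM (quat p0 p1 p2 p3) (quat p0 p1 p2 p3).
rewrite quat_sqr sigmaD sigmaZ sigma_alg sz quat_sqr -!quat_alg !quatZ !quatD.
case/quat_inj => /eqP + _ _ _; rewrite eq_sym -subr_eq0 => /eqP <-.
by rewrite /alt_trace /alt_norm; ring2 char2.
Qed.

Lemma alt_trace_sym p0 p1 p2 p3 :
  quat p0 p1 p2 p3 + s (quat p0 p1 p2 p3) = 0 -> alt_trace p1 p2 p3 = 0.
Proof.
rewrite -(scale0r e) => /sigma_quat_alt sz.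
have z_in := quat_in_qspan u v p0 p1 p2 p3.
have := qtrace_alt_mul_sym y_in z_in.
rewrite alt_y quatM qtrace_quat sz => <-; last by congr quat; ring2 char2.
by rewrite /alt_trace; ring.
Qed.

Lemma alt_norm_neq0 : alt_norm != 0.
Proof.
have key p1 p2 p3 : alt_trace p1 p2 p3 != 0 -> alt_norm != 0.
  move=> tr_neq0; have [mu alt_z] := alt_span 0 p1 p2 p3.
  apply: contraNneq tr_neq0 => eps0; have := alt_coef_root alt_z.
  rewrite eps0 mulr0 addr0 => /eqP; rewrite mulf_eq0 => /orP[/eqP mu0 | //].
  by apply/eqP/(alt_trace_sym (p0 := 0)); rewrite alt_z mu0 scale0r.
have := alt_nonscalar; rewrite orbC => /orP[e3_neq0 | e2_neq0].
  by apply: (key 0 1 0); rewrite /alt_trace !(mulr0, mulr1, addr0, add0r) mulf_neq0.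
by apply: (key 0 0 1); rewrite /alt_trace !(mulr0, mulr1, addr0, add0r) mulf_neq0.
Qed.

Lemma alt_spanE p0 p1 p2 p3 :
  quat p0 p1 p2 p3 + s (quat p0 p1 p2 p3) = (alt_trace p1 p2 p3 / alt_norm) *: e.
Proof.
have [mu alt_z] := alt_span p0 p1 p2 p3; rewrite alt_z; congr (_ *: _).
have [mu0 | mu_neq0] := eqVneq mu 0.
  by rewrite mu0 (@alt_trace_sym p0) ?mul0r // alt_z mu0 scale0r.
move/eqP: (alt_coef_root alt_z); rewrite mulf_eq0 (negbTE mu_neq0) addr_eq0 => /eqP->.
by rewrite (oppr_pchar2 char2) mulfK ?alt_norm_neq0.
Qed.

Lemma qtrace_sigma_mul_quat p0 p1 p2 p3 :
  qtrace u v (s (quat p0 p1 p2 p3) * quat p0 p1 p2 p3) =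
  p1 ^+ 2 + alt_trace p1 p2 p3 ^+ 2 / alt_norm.
Proof.
rewrite (sigma_quat_alt (alt_spanE p0 p1 p2 p3)) quatM qtrace_quat.
by rewrite /alt_trace; ring2 char2.
Qed.
End Alternating.

Lemma represents_disc_alt alpha : represents_disc s u v alpha ->
  exists y e0 e2 e3 c, [/\ y \in qspan u v, y + s y = quat e0 0 e2 e3,
    quat e0 0 e2 e3 != 0, c != 0 & alt_norm e0 e2 e3 = alpha * c ^+ 2].
Proof.
case=> y [y_in [alt_neq0 [nrd [c [nrd_alt [c_neq0 nrdE]]]]]].
have /qspanP[e0 [e1 [e2 [e3 altE]]]] : y + s y \in qspan u v.
  by apply: memvD => //; apply: sigma_qspan.
have e1_0 : e1 = 0.
  by rewrite -(qtrace_quat e0 e1 e2 e3) -altE qtraceD qtrace_sigma // addrr_pchar2.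
rewrite e1_0 in altE; rewrite altE in alt_neq0 nrd_alt.
exists y, e0, e2, e3, c; split=> //.
by rewrite (alt_norm_nrd altE alt_neq0 nrd_alt).
Qed.

Lemma qtrace_sigma_mul alpha : represents_disc s u v alpha ->
  {in qspan u v, forall z, exists s0 t0, qtrace u v (s z * z) = s0 ^+ 2 + t0 ^+ 2 * alpha}.
Proof.
case/represents_disc_alt => y [e0 [e2 [e3 [c [y_in alt_y e_neq0 c_neq0 normE]]]]].
move=> _ /qspanP[p0 [p1 [p2 [p3 ->]]]].
have alpha_neq0 : alpha != 0.
  apply: contraNneq (alt_norm_neq0 y_in alt_y e_neq0) => alpha0.
  by rewrite normE alpha0 mul0r.
exists p1, (alt_trace e0 e2 e3 p1 p2 p3 / (alpha * c)).
rewrite (qtrace_sigma_mul_quat y_in alt_y e_neq0) normE.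
by field; rewrite alpha_neq0 c_neq0.
Qed.

Lemma qtrace_sigma_mul_qbasis alpha : represents_disc s u v alpha ->
  exists k, qtrace u v (s (qbasis u v k) * qbasis u v k) != 0.
Proof.
case/represents_disc_alt => y [e0 [e2 [e3 [c [y_in alt_y e_neq0 _ _]]]]].
have trE := qtrace_sigma_mul_quat y_in alt_y e_neq0.
have norm_neq0 := alt_norm_neq0 y_in alt_y e_neq0.
have value_neq0 r : r != 0 -> 0 ^+ 2 + (b * r) ^+ 2 / alt_norm e0 e2 e3 != 0.
  by move=> r_neq0; rewrite expr0n add0r mulf_neq0 ?invr_neq0 ?expf_neq0 ?mulf_neq0.
have := alt_nonscalar alt_y e_neq0; rewrite orbC => /orP[e3_neq0 | e2_neq0].
  exists (@Ordinal 4 2 isT); rewrite /qbasis /= -[in s v * v](quat_v u v) trE.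
  by rewrite /alt_trace !(mulr0, mulr1, addr0, add0r) value_neq0.
exists (@Ordinal 4 3 isT); rewrite /qbasis /= -[in s _ * _](quat_uv u v) trE.
by rewrite /alt_trace !(mulr0, mulr1, addr0, add0r) value_neq0.
Qed.

End QuaternionInvolution.

Section PfisterValues.
Variables (F : fieldType) (n : nat) (alpha : 'I_n -> F).
Hypothesis char2 : (2 \in [pchar F])%N.

Definition pfister_value (c : F) : Prop := exists w, c = pfister alpha w w.

Lemma pfister_value_sqr k : pfister_value (k ^+ 2).
Proof.
exists [ffun S => if S == set0 then k else 0]; rewrite /pfister (bigD1 set0) //=.
rewrite [X in _ + X]big1 ?addr0 => [|S /negbTE S_neq0]; last by rewrite !ffunE S_neq0 !mulr0.
by rewrite !ffunE eqxx big_set0 mul1r expr2.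
Qed.

Lemma pfister_value0 : pfister_value 0.
Proof. by exists 0; rewrite /pfister big1 // => S _; rewrite ffunE !mulr0. Qed.

Lemma pfister_valueZ k c : pfister_value c -> pfister_value (k ^+ 2 * c).
Proof.
case=> w ->; exists [ffun S => k * w S]; rewrite /pfister mulr_sumr.
by apply: eq_bigr => S _; rewrite !ffunE; ring.
Qed.

Lemma pfister_valueD c d :
  pfister_value c -> pfister_value d -> pfister_value (c + d).
Proof.
move=> [w ->] [w' ->]; exists (w + w'); rewrite /pfister -big_split /=.
by apply: eq_bigr => S _; rewrite !ffunE; ring2 char2.
Qed.

(* Multiplication by [alpha i] is realised by the involution [S |-> S (+) {i}]
   of the index set of the diagonal form. *)
Lemma pfister_valueMalpha i c : pfister_value c -> pfister_value (alpha i * c).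
Proof.
pose toggle (S : {set 'I_n}) := if i \in S then S :\ i else i |: S.
have toggleK : involutive toggle.
  move=> S; rewrite /toggle; case iS: (i \in S); first by rewrite setD11 setD1K.
  by rewrite setU11 setU1K ?iS.
case=> w ->; exists [ffun S : {set 'I_n} => (if i \in S then 1 else alpha i) * w (toggle S)].
rewrite /pfister mulr_sumr (reindex_inj (inv_inj toggleK)) /=.
apply: eq_bigr => S _; rewrite !ffunE /toggle; case: ifP => iS.
  by rewrite (big_setD1 i iS) /=; ring.
by rewrite big_setU1 ?iS //=; ring.
Qed.

Lemma pfister_valueM_norm i s0 t0 c :
  pfister_value c -> pfister_value ((s0 ^+ 2 + t0 ^+ 2 * alpha i) * c).
Proof.
move=> c_val; rewrite mulrDl -mulrA.
by apply: pfister_valueD; apply: pfister_valueZ => //; apply: pfister_valueMalpha.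
Qed.

Lemma Qvals_pfister_value c : pfister_value c -> Qvals (pfister alpha) c.
Proof.
case: (eqVneq c 0) => [-> | c_neq0 [w cE]]; [by left | right].
exists w; split=> //; apply: contraNneq c_neq0 => w0.
by rewrite cE w0 /pfister big1 // => S _; rewrite !ffunE !mulr0.
Qed.

End PfisterValues.

Section TensorTrace.
Variables (F : fieldType) (A : falgType F).
Hypothesis char2 : (2 \in [pchar F])%N.
Variables (n : nat) (u v : 'I_n -> A) (s : A -> A).
Hypothesis s_inv : involution_first_kind s.
Local Notation Q i := (qspan (u i) (v i)).
Local Notation qb i k := (qbasis (u i) (v i) k).
Local Notation T i := (qtrace (u i) (v i)).

Definition monomial (f : {ffun 'I_n -> 'I_4}) : A := \prod_(i < n) qb i (f i).
Definition monomials : seq A := [seq monomial f | f : {ffun 'I_n -> 'I_4}].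
Definition ufun : {ffun 'I_n -> 'I_4} := [ffun=> ord_u].

Lemma monomial_index_lt f : (index f (enum {ffun 'I_n -> 'I_4}) < size monomials)%N.
Proof. by rewrite size_map index_mem mem_enum. Qed.

(* The coordinate on [u_1 ... u_n]: the tensor product of the reduced traces. *)
Definition tensor_trace : A -> F :=
  coord (in_tuple monomials) (Ordinal (monomial_index_lt ufun)).

Hypotheses
  (Q_comm : forall i j, i != j -> forall x y, x \in Q i -> y \in Q j -> x * y = y * x)
  (QM : forall i, {in Q i &, forall x y, x * y \in Q i})
  (sigma_Q : forall i, {in Q i, forall z, s z \in Q i})
  (monomial_basis : basis_of fullv monomials).

Lemma monomial_span_ind (P : A -> Prop) :
  P 0 -> (forall x y, P x -> P y -> P (x + y)) -> (forall k x, P x -> P (k *: x)) ->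
  (forall f, P (monomial f)) -> forall w, P w.
Proof.
move=> P0 PD PZ Pm w; rewrite (coord_basis (X := in_tuple monomials) monomial_basis (memvf w)).
apply: (big_ind P) => // j _; apply: PZ.
by have /mapP[f _ ->] := mem_nth 0 (ltn_ord j).
Qed.

Lemma tensor_trace_monomial f : tensor_trace (monomial f) = (f == ufun)%:R.
Proof.
have -> : monomial f = (in_tuple monomials)`_(Ordinal (monomial_index_lt f)).
  by rewrite /= (nth_map f) ?nth_index ?mem_enum // -(size_map monomial) monomial_index_lt.
rewrite /tensor_trace coord_free ?(basis_free monomial_basis) //; congr (nat_of_bool _)%:R.
by apply/idP/idP => [/eqP/(congr1 val)/index_inj-> | /eqP->]; rewrite ?mem_enum.
Qed.

Lemma commuting_prodM (r : seq 'I_n) (x y : 'I_n -> A) : uniq r ->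
  (forall i, x i \in Q i) -> (forall i, y i \in Q i) ->
  \prod_(i <- r) x i * \prod_(i <- r) y i = \prod_(i <- r) (x i * y i).
Proof.
move=> + x_in y_in; elim: r => [|j r IHr] /=; first by rewrite !big_nil mulr1.
case/andP => j_notin r_uniq; rewrite !big_cons -IHr //.
suff comm_yj : \prod_(i <- r) x i * y j = y j * \prod_(i <- r) x i.
  by rewrite mulrA -(mulrA (x j)) comm_yj !mulrA.
symmetry; rewrite big_seq_cond; apply: commr_prod => i /andP[i_in _].
by apply: Q_comm (y_in j) (x_in i); apply: contraNneq j_notin => ->.
Qed.

Lemma sigma_commuting_prod (r : seq 'I_n) (x : 'I_n -> A) : uniq r ->
  (forall i, x i \in Q i) -> s (\prod_(i <- r) x i) = \prod_(i <- r) s (x i).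
Proof.
move=> + x_in; elim: r => [|j r IHr] /=; first by rewrite !big_nil (sigma1 s_inv).
case/andP => j_notin r_uniq; rewrite !big_cons (sigmaM s_inv) IHr //.
rewrite big_seq_cond; symmetry; apply: commr_prod => i /andP[i_in _].
by apply: Q_comm (sigma_Q (x_in j)) (sigma_Q (x_in i)); apply: contraNneq j_notin => ->.
Qed.

Lemma tensor_traceD x y : tensor_trace (x + y) = tensor_trace x + tensor_trace y.
Proof. exact: linearD. Qed.

Lemma tensor_traceZ k x : tensor_trace (k *: x) = k * tensor_trace x.
Proof. exact: linearZ. Qed.

Lemma tensor_trace_sum (I : Type) (r : seq I) (x : I -> A) :
  tensor_trace (\sum_(i <- r) x i) = \sum_(i <- r) tensor_trace (x i).
Proof. exact: linear_sum. Qed.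

Lemma tensor_trace_prod (x : 'I_n -> A) : (forall i, x i \in Q i) ->
  tensor_trace (\prod_(i < n) x i) = \prod_(i < n) T i (x i).
Proof.
move=> x_in; rewrite (eq_bigr _ (fun i _ => qspan_expansion (x_in i))) bigA_distr_bigA /=.
rewrite tensor_trace_sum (bigD1 ufun) //= [X in _ + X]big1 ?addr0 => [|f f_neq];
  rewrite scaler_prod tensor_traceZ tensor_trace_monomial.
  by rewrite eqxx mulr1; apply: eq_bigr => i _; rewrite ffunE.
by rewrite (negbTE f_neq) mulr0.
Qed.

Hypothesis trace_sigma : forall i, {in Q i, forall z, T i (s z) = T i z}.

Lemma sigma_monomial f : s (monomial f) = \prod_(i < n) s (qb i (f i)).
Proof. by rewrite sigma_commuting_prod ?index_enum_uniq // => i; apply: qbasis_in_qspan. Qed.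

Lemma tensor_trace_sigma w : tensor_trace (s w) = tensor_trace w.
Proof.
elim/monomial_span_ind: w => [|x y IHx IHy|k x IHx|f].
- by rewrite (sigma0 s_inv).
- by rewrite (sigmaD s_inv) !tensor_traceD IHx IHy.
- by rewrite (sigmaZ s_inv) !tensor_traceZ IHx.
have qb_in i : qb i (f i) \in Q i := qbasis_in_qspan _ _ _.
rewrite sigma_monomial !tensor_trace_prod // => [|i]; last exact: sigma_Q.
by apply: eq_bigr => i _; rewrite trace_sigma.
Qed.

Definition trace_qform (w : A) : F := tensor_trace (s w * w).

Lemma trace_qformD x y : trace_qform (x + y) = trace_qform x + trace_qform y.
Proof.
rewrite /trace_qform (sigmaD s_inv) mulrDl !mulrDr !tensor_traceD.
have -> : tensor_trace (s y * x) = tensor_trace (s x * y).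
  by rewrite -tensor_trace_sigma (sigmaM s_inv) (sigmaK s_inv).
set r := tensor_trace (s x * y).
by rewrite addrA -(addrA _ r r) (addrr_pchar2 char2) addr0.
Qed.

Lemma trace_qformZ k x : trace_qform (k *: x) = k ^+ 2 * trace_qform x.
Proof.
by rewrite /trace_qform (sigmaZ s_inv) -scalerAl -scalerAr scalerA tensor_traceZ expr2.
Qed.

Lemma trace_qform_monomial f :
  trace_qform (monomial f) = \prod_(i < n) T i (s (qb i (f i)) * qb i (f i)).
Proof.
have qb_in i : qb i (f i) \in Q i := qbasis_in_qspan _ _ _.
have sqb_in i : s (qb i (f i)) \in Q i := sigma_Q (qb_in i).
rewrite /trace_qform sigma_monomial /monomial commuting_prodM ?index_enum_uniq //.
by rewrite tensor_trace_prod // => i; apply: QM.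
Qed.

Lemma trace_qform_symM x c w :
  s x = x -> x * x = c%:A -> trace_qform (x * w) = c * trace_qform w.
Proof.
move=> sx xx; rewrite /trace_qform (sigmaM s_inv) sx -mulrA (mulrA x) xx.
by rewrite mulr_algl -scalerAr tensor_traceZ.
Qed.

Variable alpha : 'I_n -> F.
Hypotheses
  (trace_norm : forall i, {in Q i, forall z,
     exists s0 t0, T i (s z * z) = s0 ^+ 2 + t0 ^+ 2 * alpha i})
  (trace_norm_neq0 : forall i, exists k, T i (s (qb i k) * qb i k) != 0).

Lemma pfister_value_monomialM f c :
  pfister_value alpha c -> pfister_value alpha (trace_qform (monomial f) * c).
Proof.
move=> c_val; rewrite trace_qform_monomial.
elim/big_rec: _ => [|i d _ d_val]; first by rewrite mul1r.
have [s0 [t0 ->]] := trace_norm (qbasis_in_qspan (u i) (v i) (f i)).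
by rewrite -mulrA; apply: pfister_valueM_norm.
Qed.

Lemma pfister_value_trace_qform w : pfister_value alpha (trace_qform w).
Proof.
elim/monomial_span_ind: w => [|x y|k x|f].
- by rewrite /trace_qform mulr0 -(scale0r 0) tensor_traceZ mul0r; apply: pfister_value0.
- by rewrite trace_qformD; apply: pfister_valueD.
- by rewrite trace_qformZ; apply: pfister_valueZ.
rewrite -[trace_qform _]mulr1; apply: pfister_value_monomialM.
by rewrite -(expr1n F 2); apply: pfister_value_sqr.
Qed.

Lemma pfister_value_sym_sqr x c : s x = x -> x * x = c%:A -> pfister_value alpha c.
Proof.
move=> sx xx; pose f0 := [ffun i => xchoose (trace_norm_neq0 i)].
have d_neq0 : trace_qform (monomial f0) != 0.
  rewrite trace_qform_monomial; apply/prodf_neq0 => i _.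
  by rewrite ffunE (xchooseP (trace_norm_neq0 i)).
set d := trace_qform (monomial f0) in d_neq0 *.
have dcd_val : pfister_value alpha (d * (c * d)).
  apply: pfister_value_monomialM; rewrite -(trace_qform_symM _ sx xx).
  exact: pfister_value_trace_qform.
have := pfister_valueZ d^-1 dcd_val.
by rewrite (_ : d^-1 ^+ 2 * (d * (c * d)) = c) //; field.
Qed.

End TensorTrace.

Theorem corollary4p9 (F : fieldType) (A : falgType F) (s : A -> A)
    (n : nat) (u v : 'I_n -> A) (alpha : 'I_n -> F) :
  (2 \in [pchar F])%N ->
  central_simple A ->
  involution_first_kind s ->
  orthogonal_inv s ->
  tot_decomp s u v ->
  (forall i, represents_disc s (u i) (v i) (alpha i)) ->
  forall x : A, SymPlus s x ->
  forall c : F, x * x = c%:A ->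
  Qvals (pfister alpha) c.
Proof.
move=> char2 _ s_inv s_orth [gens [sigma_gens [Q_comm basis]]] disc x [sx _] c xx.
have quaternion_facts i :
    [/\ {in qspan (u i) (v i) &, forall y z, y * z \in qspan (u i) (v i)},
        {in qspan (u i) (v i), forall z, s z \in qspan (u i) (v i)},
        {in qspan (u i) (v i), forall z, qtrace (u i) (v i) (s z) = qtrace (u i) (v i) z},
        {in qspan (u i) (v i), forall z, exists s0 t0,
           qtrace (u i) (v i) (s z * z) = s0 ^+ 2 + t0 ^+ 2 * alpha i}
      & exists k, qtrace (u i) (v i) (s (qbasis (u i) (v i) k) * qbasis (u i) (v i) k) != 0].
  have [a [b [b_neq0 [uu [vv vu]]]]] := gens i; have [su sv] := sigma_gens i.
  split.
  - exact (qspanM uu vv vu).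
  - exact (sigma_qspan uu vv vu s_inv su sv).
  - exact (qtrace_sigma char2 b_neq0 uu vv vu s_inv su sv).
  - exact (qtrace_sigma_mul char2 b_neq0 uu vv vu s_inv su sv s_orth (disc i)).
  - exact (qtrace_sigma_mul_qbasis char2 b_neq0 uu vv vu s_inv su sv s_orth (disc i)).
apply/Qvals_pfister_value/(pfister_value_sym_sqr char2 s_inv Q_comm _ _ basis _ _ _ sx xx).
all: by move=> i; case: (quaternion_facts i).
Qed.
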